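(* Let $\beta,\gamma\in\mathcal S_n$, where $\beta$ is a single $n$-cycle. Then $(\varepsilon,\beta,\gamma;(12))\in\mathrm{Par}(n)$ if and only if both of the following hold: <ul> <li>(i) the length of each cycle of $\gamma$ divides $2n$;</li> <li>(ii) at most one cycle of $\gamma$ has odd length.</li> </ul> Fixed points count as cycles of length $1$.
   Context: A Latin square of order $n$ is an $n\times n$ array with rows, columns and symbols indexed by $[n]$, each symbol occurring once in each row and each column, with triple set $O(L)$. Permutations act on the right; $\varepsilon$ is the identity. A paratopism $(\alpha,\beta,\gamma;(12))$ maps $L$ to $L^\sigma$ with triple set $\{(y\beta,x\alpha,z\gamma):(x,y,z)\in O(L)\}$; it is an autoparatopism of $L$ if $L^\sigma=L$. $\mathrm{Par}(n)$ is the set of paratopisms that are autoparatopisms of at least one Latin square of order $n$. *)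

From mathcomp Require Import all_boot all_order all_fingroup.
Set Implicit Arguments.
Unset Strict Implicit.
Unset Printing Implicit Defensive.

Definition latin_square (n : nat) (L : 'I_n -> 'I_n -> 'I_n) : Prop :=
  (forall x, injective (L x)) /\ (forall y, injective (fun x => L x y)).

Definition triples (n : nat) (L : 'I_n -> 'I_n -> 'I_n) : {set 'I_n * 'I_n * 'I_n} :=
  [set t | t.2 == L t.1.1 t.1.2].

(* Image of L under the paratopism (alpha, beta, gamma; (12)):
   triples {(y beta, x alpha, z gamma) : (x,y,z) in O(L)}.  Permutations act
   on the right, so "x alpha" is written (alpha x). *)
Definition paratopism12_image (n : nat) (alpha beta gamma : {perm 'I_n})
  (L : 'I_n -> 'I_n -> 'I_n) : {set 'I_n * 'I_n * 'I_n} :=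
  [set (beta t.1.2, alpha t.1.1, gamma t.2) | t in triples L].

Definition autoparatopism12 (n : nat) (alpha beta gamma : {perm 'I_n})
  (L : 'I_n -> 'I_n -> 'I_n) : Prop :=
  paratopism12_image alpha beta gamma L = triples L.

Definition in_Par12 (n : nat) (alpha beta gamma : {perm 'I_n}) : Prop :=
  exists L : 'I_n -> 'I_n -> 'I_n, latin_square L /\ autoparatopism12 alpha beta gamma L.

Definition is_full_cycle (n : nat) (beta : {perm 'I_n}) : Prop :=
  #|porbits beta| = 1.

From mathcomp Require Import all_boot all_order all_fingroup.
From mathcomp Require Import zify.
Set Implicit Arguments.
Unset Strict Implicit.
Unset Printing Implicit Defensive.

(* The autoparatopism condition reads L (beta y) x = gamma (L x y).  Listing
   the n-cycle beta as x0, beta x0, beta^2 x0, ..., the square is therefore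
   determined by the row r t = L x0 (beta^t x0), a bijection satisfying
   gamma^(2t+1) (r (n-1-t)) = r t; conversely every such twisted sequence r
   gives a Latin square via L (beta^i x0) (beta^(i+t) x0) = gamma^(2i) (r t).
   For a twisted sequence gamma^(2n) = 1, and t |-> n-1-t permutes the
   positions whose value lies in a given gamma-cycle, so an odd cycle contains
   the value at the unique fixed point t = (n-1)/2: there is at most one.
   Conversely a cycle of length 2m fills m symmetric pairs of positions
   {t, n-1-t}, and the odd cycle, whose length then divides n, fills the
   middle positions. *)

Section PorbitPowers.
Variables (T : finType) (s : {perm T}).

Lemma permX_porbit_mod x m : (s ^+ (m %% #|porbit s x|))%g x = (s ^+ m)%g x.
Proof.
rewrite {2}(divn_eq m #|porbit s x|) expgD permM !permX.
by rewrite iterM (iter_fix _ (iter_porbit s x)).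
Qed.

Lemma eq_permX_porbit x m k :
  ((s ^+ m)%g x == (s ^+ k)%g x) = (m == k %[mod #|porbit s x|]).
Proof.
have lt_mod j : j %% #|porbit s x| < #|porbit s x|.
  by rewrite ltn_pmod // lt0n card_porbit_neq0.
rewrite -permX_porbit_mod -(permX_porbit_mod x k) !permX.
rewrite -!(nth_traject _ (lt_mod _)) nth_uniq ?size_traject ?lt_mod //.
exact: uniq_traject_porbit.
Qed.

Lemma card_porbit_dvd x k : (s ^+ k = 1)%g -> #|porbit s x| %| k.
Proof.
by move=> sk1; rewrite /dvdn -(mod0n #|porbit s x|) -eq_permX_porbit sk1 expg0.
Qed.

Lemma expg_porbits_dvd k :
  (forall C, C \in porbits s -> #|C| %| k) -> (s ^+ k = 1)%g.
Proof.
move=> dvd_k; apply/permP => x; apply/eqP.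
rewrite -(expg0 s) eq_permX_porbit mod0n.
by apply: dvd_k; apply: imset_f.
Qed.

Lemma porbit_perm1 x : porbit s (s x) = porbit s x.
Proof. exact: (porbit_perm s 1). Qed.

Lemma odd_porbitsE x : #|[set C in porbits s | odd #|C|]| <= 1 ->
  odd #|porbit s x| -> [set y | odd #|porbit s y|] = porbit s x.
Proof.
move=> odd_le1 odd_x; apply/setP => y; rewrite inE -eq_porbit_mem.
apply/idP/eqP => [odd_y|->//].
by apply: (card_le1_eqP odd_le1); rewrite inE imset_f.
Qed.

Lemma porbits_memE C y : C \in porbits s -> y \in C -> C = porbit s y.
Proof.
by case/imsetP=> x _ -> yC; apply/eqP; rewrite eq_sym eq_porbit_mem.
Qed.
End PorbitPowers.

Lemma odd_card_involution (T : finType) (f : T -> T) (A : {set T}) :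
  involutive f -> {in A, forall x, f x \in A} -> odd #|A| ->
  exists2 x, x \in A & f x = x.
Proof.
move=> fK fA oddA.
have [/exists_inP[x xA /eqP fx]|/exists_inPn no_fix] :=
  boolP [exists x in A, f x == x]; first by exists x.
have clA : fclosed f A.
  by apply: (intro_closed (fconnect_sym (can_inj fK))) => x _ /eqP <-; apply: fA.
have ordA : A \subset order_set f 2.
  apply/subsetP => x xA; rewrite inE (@order_cycle _ f [:: x; f x]) //=.
  - by rewrite fK !eqxx.
  - by rewrite inE eq_sym no_fix.
  - exact: mem_head.
move: oddA; rewrite -(fcard_order_set (can_inj fK) ordA clA).
by rewrite oddM andbF.
Qed.

Lemma eq_mod_interval m lo a b :
  lo <= a < lo + m -> lo <= b < lo + m -> a = b %[mod m] -> a = b.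
Proof.
wlog le_ab : a b / a <= b => [wlog_ab|] a_in b_in ab_m.
  by case: (leqP a b) => [|/ltnW] ?; [|symmetry]; apply: wlog_ab.
have /dvdnP[c bac] : m %| b - a by rewrite -eqn_mod_dvd // ab_m.
have c0 : c = 0 by nia.
by move: bac; rewrite c0; lia.
Qed.

Lemma expg_double_mod (gT : finGroupType) (x : gT) n a b :
  (x ^+ (2 * n) = 1)%g -> a = b %[mod n] -> (x ^+ (2 * a) = x ^+ (2 * b))%g.
Proof.
by move=> x2n ab; rewrite -(expg_mod _ x2n) -[RHS](expg_mod _ x2n) -!muln_modr ab.
Qed.

Section Twisted.
Variables (n : nat) (g : {perm 'I_n}).

Definition twisted_seq (r : 'I_n -> 'I_n) : Prop :=
  injective r /\ forall t : 'I_n, (g ^+ (2 * t).+1)%g (r (rev_ord t)) = r t.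

Lemma twisted_seq_expg r : twisted_seq r -> (g ^+ (2 * n))%g = 1%g.
Proof.
case=> r_inj r_tw; apply/permP => z; rewrite perm1.
have [t ->] := codomP (injF_onto r_inj z).
have -> : 2 * n = (2 * rev_ord t).+1 + (2 * t).+1 by have := ltn_ord t; rewrite /=; lia.
have := r_tw (rev_ord t); rewrite rev_ordK expgD permM => ->; exact: r_tw.
Qed.

Lemma twisted_seq_odd_porbit r C : twisted_seq r ->
  C \in porbits g -> odd #|C| -> exists2 t : 'I_n, r t \in C & rev_ord t = t.
Proof.
move=> [r_inj r_tw] gC oddC.
have rev_stable : {in r @^-1: C, forall t, rev_ord t \in r @^-1: C}.
  move=> t; rewrite !inE => Ct.
  by rewrite (porbits_memE gC Ct) -r_tw rev_ordK mem_porbit.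
have odd_preim : odd #|r @^-1: C| by rewrite card_preimset.
have [t] := odd_card_involution (@rev_ordK n) rev_stable odd_preim.
by rewrite inE; exists t.
Qed.

Lemma twisted_seq_cycle_conditions r : twisted_seq r ->
  (forall C, C \in porbits g -> #|C| %| 2 * n) /\
  #|[set C in porbits g | odd #|C|]| <= 1.
Proof.
move=> tw; split=> [C /imsetP[x _ ->]|].
  exact/card_porbit_dvd/(twisted_seq_expg tw).
apply/card_le1_eqP => C1 C2; rewrite !inE => /andP[gC1 odd1] /andP[gC2 odd2].
have [t1 C1t1 fix1] := twisted_seq_odd_porbit tw gC1 odd1.
have [t2 C2t2 fix2] := twisted_seq_odd_porbit tw gC2 odd2.
have t12 : t1 = t2.
  by apply: val_inj; move: fix1 fix2 => /(congr1 val) /= ? /(congr1 val) /=; lia.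
by rewrite (porbits_memE gC1 C1t1) (porbits_memE gC2 C2t2) t12.
Qed.

Definition pair_block (lo k : nat) : pred 'I_n :=
  [pred u : 'I_n | (lo <= u < lo + k) || (n - (lo + k) <= u < n - lo)].

Definition twisted_block lo k (S : {set 'I_n}) (r : 'I_n -> 'I_n) : Prop :=
  [/\ forall t : 'I_n, lo <= t < lo + k -> (g ^+ (2 * t).+1)%g (r (rev_ord t)) = r t,
      {in pair_block lo k, forall u, r u \in S} &
      {in pair_block lo k &, injective r}].

Lemma twisted_block_cat lo k1 k2 (S1 S2 : {set 'I_n}) r1 r2 :
  2 * (lo + k1) + k2 <= n -> [disjoint S1 & S2] ->
  twisted_block lo k1 S1 r1 -> twisted_block (lo + k1) k2 S2 r2 ->
  twisted_block lo (k1 + k2) (S1 :|: S2)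
    (fun u => if u \in pair_block lo k1 then r1 u else r2 u).
Proof.
move=> le_n S12 [tw1 S1r1 inj1] [tw2 S2r2 inj2].
have blockE u : (u \in pair_block lo (k1 + k2)) =
    (u \in pair_block lo k1) || (u \in pair_block (lo + k1) k2).
  by have := ltn_ord u; rewrite /pair_block !inE; lia.
split=> [t t_in | u | u v]; rewrite ?blockE.
- have := ltn_ord t; case: (ltnP t (lo + k1)) => t_k1.
    by rewrite /pair_block !inE /= !ifT ?tw1 //; lia.
  by rewrite /pair_block !inE /= !ifF ?tw2 //; lia.
- case: ifP => [u1 _|_ /= u2].
    by rewrite in_setU (S1r1 _ u1).
  by rewrite in_setU (S2r2 _ u2) orbT.
- case: ifP => [u1|_]; case: ifP => [v1|_] /= u_in v_in; last exact: inj2.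
  + exact: inj1.
  + move=> r12; have := S1r1 _ u1; rewrite r12.
    by rewrite (disjointFl S12) // S2r2.
  + move=> r21; have := S1r1 _ v1; rewrite -r21.
    by rewrite (disjointFl S12) // S2r2.
Qed.

Lemma twisted_block_even_cycle s lo m :
  #|porbit g s| = 2 * m -> 2 * (lo + m) <= n ->
  exists r, twisted_block lo m (porbit g s) r.
Proof.
move=> card_s le_n.
have m_gt0 : 0 < m by move: (card_porbit_neq0 g s); rewrite card_s; lia.
(* r t = g^(t mod m) s and r (n-1-t) = g^(2m-1-(t mod m)) s: the twisted
   condition holds as 2 (t mod m) = 2t (mod 2m), and the two halves of the
   block take the exponents in [0, m) and [m, 2m) respectively. *)
pose e (u : 'I_n) := if u < lo + m then u %% m else (2 * m).-1 - (n - u.+1) %% m.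
have e_lt u : e u < 2 * m by rewrite /e; case: ifP; have := ltn_pmod u m_gt0; lia.
exists (fun u => (g ^+ e u)%g s); split.
- move=> t t_in; have t_lt := ltn_ord t.
  rewrite -permM -expgD; apply/eqP; rewrite eq_permX_porbit card_s /e /=.
  rewrite ifF; last by lia.
  rewrite ifT; last by lia.
  have -> : n - (n - t.+1).+1 = t by lia.
  have rho_lt := ltn_pmod t m_gt0; have t_eq := divn_eq t m.
  have -> : (2 * m).-1 - t %% m + (2 * t).+1 = (t %/ m).+1 * (2 * m) + t %% m by nia.
  by rewrite modnMDl.
- by move=> u _; apply: mem_porbit.
- move=> u v u_in v_in /eqP.
  have lo_in w : w \in pair_block lo m -> w < lo + m -> lo <= w < lo + m.
    by rewrite /pair_block inE; lia.
  have hi_in w : w \in pair_block lo m -> w >= lo + m -> lo <= n - w.+1 < lo + m.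
    by have := ltn_ord w; rewrite /pair_block inE; lia.
  rewrite eq_permX_porbit card_s !modn_small // /e; clear e e_lt.
  have ltm := ltn_pmod _ m_gt0.
  case: ifP => u_lo; case: ifP => v_lo /eqP e_uv; apply: ord_inj.
  - exact: eq_mod_interval (lo_in _ u_in u_lo) (lo_in _ v_in v_lo) e_uv.
  - by move: e_uv (ltm u) (ltm (n - v.+1)); lia.
  - by move: e_uv (ltm v) (ltm (n - u.+1)); lia.
  - have {}e_uv : n - u.+1 = n - v.+1 %[mod m].
      by move: e_uv (ltm (n - u.+1)) (ltm (n - v.+1)); lia.
    have u_hi : lo <= n - u.+1 < lo + m by apply: hi_in; rewrite // leqNgt u_lo.
    have v_hi : lo <= n - v.+1 < lo + m by apply: hi_in; rewrite // leqNgt v_lo.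
    have := eq_mod_interval u_hi v_hi e_uv.
    by have := ltn_ord u; have := ltn_ord v; lia.
Qed.

Lemma twisted_block_central_cycle s lo :
  #|porbit g s| %| n -> 2 * lo + #|porbit g s| = n ->
  exists r, twisted_block lo (uphalf #|porbit g s|) (porbit g s) r.
Proof.
set l := #|porbit g s| => /dvdnP[c n_cl] card_n.
have block_in u : u \in pair_block lo (uphalf l) -> lo <= u < n - lo.
  by rewrite /pair_block inE; lia.
exists (fun u => (g ^+ (u - lo))%g s); split.
- move=> t t_in; have t_lt := ltn_ord t.
  rewrite -permM -expgD; apply/eqP; rewrite eq_permX_porbit -/l /=.
  have -> : n - t.+1 - lo + (2 * t).+1 = c * l + (t - lo) by lia.
  by rewrite modnMDl.
- by move=> u _; apply: mem_porbit.
- move=> u v /block_in u_in /block_in v_in /eqP.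
  rewrite eq_permX_porbit -/l !modn_small; try lia.
  by move=> /eqP uv; apply: ord_inj; lia.
Qed.

Lemma twisted_block_even_cycles (S : {set 'I_n}) :
  {in S, forall x, g x \in S} -> {in S, forall x, ~~ odd #|porbit g x|} ->
  ~~ odd #|S| /\
  forall lo, 2 * lo + #|S| <= n -> exists r, twisted_block lo #|S|./2 S r.
Proof.
elim: {S}_.+1 {-2}S (ltnSn #|S|) => // k IH S S_k gS evenS.
have [->|[s Ss]] := set_0Vmem S.
  split=> [|lo _]; first by rewrite cards0.
  by exists id; split=> [t|u|u v]; rewrite ?cards0 /pair_block ?inE; lia.
pose C := porbit g s; pose S' := S :\: C.
have CS : C \subset S.
  apply/subsetP => y /porbitP[i ->]; rewrite permX.
  by elim: i => //= i IHi; apply: gS.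
have /negPf even_C := evenS s Ss.
have [m card_C] : exists m, #|C| = 2 * m.
  by exists #|C|./2; rewrite -{1}(odd_double_half #|C|) even_C -muln2; lia.
have C_gt0 : 0 < #|C| by rewrite lt0n card_porbit_neq0.
have card_S : #|S| = #|C| + #|S'|.
  by rewrite cardsD (setIidPr CS) subnKC ?subset_leq_card.
have gS' : {in S', forall x, g x \in S'}.
  move=> x; rewrite !inE => /andP[Cx Sx]; rewrite gS // andbT.
  by apply: contra Cx; rewrite -!eq_porbit_mem porbit_perm1.
have evenS' : {in S', forall x, ~~ odd #|porbit g x|}.
  by move=> x /setDP[Sx _]; apply: evenS.
have [even_S' blockS'] := IH S' ltac:(lia) gS' evenS'.
split=> [|lo le_n]; first by rewrite card_S oddD even_C (negPf even_S').
have [r1 tw1] := twisted_block_even_cycle (lo := lo) card_C ltac:(lia).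
have [r2 tw2] := blockS' (lo + m) ltac:(lia).
have CS' : [disjoint C & S'].
  by rewrite disjoints_subset; apply/subsetP => y; rewrite !inE => ->.
have -> : #|S|./2 = m + #|S'|./2 by move: even_S'; rewrite card_S card_C; lia.
rewrite -(setID S C) (setIidPr CS) -/S'.
by eexists; apply: twisted_block_cat CS' tw1 tw2; lia.
Qed.

Lemma twisted_seq_of_block r : (g ^+ (2 * n))%g = 1%g ->
  twisted_block 0 (uphalf n) [set: 'I_n] r -> twisted_seq r.
Proof.
move=> g2n [tw _ r_inj]; have block_all u : u \in pair_block 0 (uphalf n).
  by have := ltn_ord u; rewrite /pair_block inE; lia.
split=> [u v|t]; first exact: r_inj (block_all u) (block_all v).
have := ltn_ord t; case: (ltnP t (uphalf n)) => [t_lo _|t_hi t_lt]; first exact: tw.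
have := tw (rev_ord t); rewrite rev_ordK => <-; last by rewrite /=; lia.
rewrite -permM -expgD.
have -> : (2 * rev_ord t).+1 + (2 * t).+1 = 2 * n by rewrite /=; lia.
by rewrite g2n perm1.
Qed.

Lemma cycle_conditions_twisted_seq :
  (forall C, C \in porbits g -> #|C| %| 2 * n) ->
  #|[set C in porbits g | odd #|C|]| <= 1 -> exists r, twisted_seq r.
Proof.
move=> dvd_2n odd_le1; have g2n := expg_porbits_dvd dvd_2n.
pose O := [set x | odd #|porbit g x|]; pose E := ~: O.
have gE : {in E, forall x, g x \in E} by move=> x; rewrite !inE porbit_perm1.
have evenE : {in E, forall x, ~~ odd #|porbit g x|} by move=> x; rewrite !inE.
have [even_E blockE] := twisted_block_even_cycles gE evenE.
have card_EO : #|E| + #|O| = n by rewrite /E addnC cardsC card_ord.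
have [r_E tw_E] := blockE 0 ltac:(lia).
have [O0 | [s0 Os0]] := set_0Vmem O.
  rewrite /E O0 setC0 cardsT card_ord in even_E tw_E.
  exists r_E; apply: twisted_seq_of_block => //.
  by have -> : uphalf n = n./2 by lia.
have odd_s0 : odd #|porbit g s0| by rewrite inE in Os0.
have OE : O = porbit g s0 by apply: odd_porbitsE.
have dvd_l : #|porbit g s0| %| n.
  have gO : porbit g s0 \in porbits g by apply: imset_f.
  by have := dvd_2n _ gO; rewrite Gauss_dvdr ?coprimen2.
have card_l : 2 * #|E|./2 + #|porbit g s0| = n by rewrite -OE; move: even_E; lia.
have [r_O tw_O] := twisted_block_central_cycle dvd_l card_l.
have EO : [disjoint E & porbit g s0] by rewrite -OE /E disjoints_subset subxx.
have EO_full : E :|: O = [set: 'I_n] by rewrite setUC setUCr.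
have := twisted_block_cat _ EO tw_E tw_O; rewrite -OE EO_full => tw.
eexists; apply: twisted_seq_of_block g2n _.
have -> : uphalf n = #|E|./2 + uphalf #|O| by lia.
by apply: tw; lia.
Qed.
End Twisted.

Lemma autoparatopism12P n (beta gamma : {perm 'I_n}) (L : 'I_n -> 'I_n -> 'I_n) :
  autoparatopism12 1%g beta gamma L <-> forall x y, L (beta y) x = gamma (L x y).
Proof.
split=> [auto_L x y | rule].
  have : (beta y, (1%g : {perm 'I_n}) x, gamma (L x y))
      \in paratopism12_image 1%g beta gamma L.
    by apply/imsetP; exists (x, y, L x y); rewrite // inE.
  by rewrite auto_L inE /= perm1 => /eqP ->.
apply/setP => [[[x y] z]]; rewrite inE /=; apply/imsetP/eqP => [[[[x' y'] z']]|->].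
  by rewrite inE /= => /eqP -> [-> -> ->]; rewrite perm1 rule.
exists (y, beta^-1%g x, L y (beta^-1%g x)); first by rewrite inE.
by rewrite /= perm1 -rule permKV.
Qed.

Lemma autoparatopism12_expg n (beta gamma : {perm 'I_n}) (L : 'I_n -> 'I_n -> 'I_n) :
  autoparatopism12 1%g beta gamma L ->
  forall a x y, L ((beta ^+ a)%g x) ((beta ^+ a)%g y) = (gamma ^+ (2 * a))%g (L x y).
Proof.
move=> /autoparatopism12P rule; elim=> [|a IH] x y; first by rewrite !expg0 !perm1.
by rewrite mulnSr expgD !expgSr !permM expg0 perm1 rule rule IH.
Qed.

Section FullCycle.
Variables (n : nat) (beta gamma : {perm 'I_n}).
Hypothesis beta_full : is_full_cycle beta.

Lemma full_cycle_porbit x : porbit beta x = [set: 'I_n].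
Proof.
have le1 : #|porbits beta| <= 1 by rewrite beta_full.
apply/setP => y; rewrite inE -eq_porbit_mem.
by apply/eqP/(card_le1_eqP le1); apply: imset_f.
Qed.

Lemma card_porbit_full_cycle x : #|porbit beta x| = n.
Proof. by rewrite full_cycle_porbit cardsT card_ord. Qed.

Lemma full_cycle_gt0 : 0 < n.
Proof. by rewrite -(card_ord n) -beta_full leq_imset_card. Qed.

Lemma expg_full_cycle : (beta ^+ n)%g = 1%g.
Proof.
by apply: expg_porbits_dvd => C /imsetP[x _ ->]; rewrite card_porbit_full_cycle.
Qed.

Lemma full_cycle_enum_inj x : injective (fun t : 'I_n => (beta ^+ t)%g x).
Proof.
move=> t1 t2 /eqP; rewrite eq_permX_porbit card_porbit_full_cycle !modn_small //.
by move/eqP/ord_inj.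
Qed.

Definition cycle_offset x : 'I_n -> 'I_n := invF (@full_cycle_enum_inj x).

Lemma cycle_offsetK x y : (beta ^+ cycle_offset x y)%g x = y.
Proof. exact: (f_invF (@full_cycle_enum_inj x)). Qed.

Lemma cycle_offset_eq x y (t : 'I_n) : (beta ^+ t)%g x = y -> cycle_offset x y = t.
Proof. by move=> <-; apply: (invF_f (@full_cycle_enum_inj x)). Qed.

Lemma in_Par12_twisted_seq : in_Par12 1%g beta gamma -> exists r, twisted_seq gamma r.
Proof.
case=> L [[row_inj _] auto_L].
have /autoparatopism12P rule := auto_L; have powL := autoparatopism12_expg auto_L.
pose x0 := Ordinal full_cycle_gt0.
have g2n : (gamma ^+ (2 * n))%g = 1%g.
  apply/permP => z; rewrite perm1.
  have [y ->] := codomP (injF_onto (row_inj x0) z).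
  by rewrite -powL expg_full_cycle !perm1.
exists (fun t => L x0 ((beta ^+ t)%g x0)); split.
  by move=> t1 t2 /row_inj /full_cycle_enum_inj.
move=> t /=; have t_lt := ltn_ord t.
have gamma_rev : gamma (L x0 ((beta ^+ (n - t.+1))%g x0)) =
    (gamma ^+ (2 * (n - t)))%g (L x0 ((beta ^+ t)%g x0)).
  rewrite -rule -powL; congr L.
    by rewrite -permM -expgSr subnSK.
  by rewrite -permM -expgD subnKC ?expg_full_cycle ?perm1 // ltnW.
rewrite expgS permM gamma_rev -permM -expgD.
have -> : 2 * (n - t) + 2 * t = 2 * n by lia.
by rewrite g2n perm1.
Qed.

Lemma twisted_seq_in_Par12 r : twisted_seq gamma r -> in_Par12 1%g beta gamma.
Proof.
move=> tw; have g2n := twisted_seq_expg tw; case: tw => r_inj r_tw.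
pose x0 := Ordinal full_cycle_gt0.
pose L x y := (gamma ^+ (2 * cycle_offset x0 x))%g (r (cycle_offset x y)).
have rule x y : L (beta y) x = gamma (L x y).
  set t := cycle_offset x y; have t_lt := ltn_ord t.
  have y_def : (beta ^+ t)%g x = y := cycle_offsetK x y.
  have off_rev : cycle_offset (beta y) x = rev_ord t.
    apply: cycle_offset_eq; rewrite -y_def -!permM -expgS -expgD.
    have -> : t + (rev_ord t).+1 = n by rewrite /=; lia.
    by rewrite expg_full_cycle perm1.
  have off_x0 : cycle_offset x0 (beta y) = (cycle_offset x0 x + t).+1 %[mod n].
    have := eq_permX_porbit beta x0; rewrite card_porbit_full_cycle => eq_x0.
    apply/eqP; rewrite -eq_x0 cycle_offsetK.
    by rewrite -y_def -{1}(cycle_offsetK x0 x) -!permM -expgSr -expgD addnS.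
  rewrite /L off_rev -[r t]r_tw -!permM -expgSr -expgD (expg_double_mod g2n off_x0).
  by congr (fun_of_perm (gamma ^+ _)%g _); lia.
have row_inj x : injective (L x).
  move=> y1 y2 /perm_inj /r_inj off12.
  by rewrite -(cycle_offsetK x y1) off12 cycle_offsetK.
exists L; split; last exact/autoparatopism12P.
split=> // y x1 x2 L12.
apply: (can_inj (permKV beta)); apply: (row_inj y); apply: (@perm_inj _ gamma).
by rewrite -!rule !permKV.
Qed.
End FullCycle.

Theorem theorem4p8 (n : nat) (beta gamma : {perm 'I_n}) :
  is_full_cycle beta ->
  (in_Par12 1%g beta gamma <->
   ((forall C, C \in porbits gamma -> #|C| %| 2 * n) /\
    #|[set C in porbits gamma | odd #|C|]| <= 1)).
Proof.
move=> beta_full; split.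
  by case/(in_Par12_twisted_seq beta_full) => r /twisted_seq_cycle_conditions.
case=> dvd_2n odd_le1; have [r tw] := cycle_conditions_twisted_seq dvd_2n odd_le1.
exact: (twisted_seq_in_Par12 beta_full tw).
Qed.
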